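(* Let $k\neq0$ be an integer and $r=[2,2k,-2,-2]$. Then: (1) if $k<0$, every zero of $\Delta_{K(r)}(t)$ is real or of modulus $1$, and both real zeros and non-real zeros of modulus $1$ occur; (2) if $k\in\{1,2,3\}$, no zero of $\Delta_{K(r)}(t)$ is real or of modulus $1$; (3) if $k\ge4$, all zeros of $\Delta_{K(r)}(t)$ have modulus $1$.
   Context: For a finite sequence $r=[2a_1,2a_2,\dots,2a_n]$ of nonzero even integers, $K(r)$ denotes the 2-bridge knot or link whose associated rational number has the even continued fraction expansion $1/(2a_1-1/(2a_2-\cdots-1/(2a_n)))$. Let $M(r)$ be the $n\times n$ integer matrix whose $(k,k)$-entry is $a_k$, whose $(k,k+1)$-entry is $1$ ($1\le k\le n-1$), and whose other entries are $0$; $\Delta_{K(r)}(t)=\det(tM(r)-M(r)^T)$ is the (reduced) Alexander polynomial of $K(r)$ (up to sign). *)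

From HB Require Import structures.
From mathcomp Require Import all_boot all_order all_algebra all_field.
Set Implicit Arguments. Unset Strict Implicit. Unset Printing Implicit Defensive.
Import Order.TTheory GRing.Theory Num.Theory.
Local Open Scope ring_scope.

(* For r = [2a_1; ...; 2a_n] (a list of nonzero even integers), M(r) is the
   n x n integer matrix with (k,k)-entry a_k = r_k / 2, (k,k+1)-entry 1,
   and all other entries 0 (indices 0-based here). *)
Definition Mr (r : seq int) : 'M[int]_(size r) :=
  \matrix_(i < size r, j < size r)
    (if i == j :> nat then (r`_i %/ 2)%Z
     else if j == i.+1 :> nat then 1 else 0).

Definition alexander_poly (r : seq int) : {poly int} :=
  \det (\matrix_(i, j) ('X * ((Mr r) i j)%:P - ((Mr r) j i)%:P)).

Definition is_zero_of (p : {poly int}) (z : algC) : Prop :=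
  root (map_poly intr p) z.

From HB Require Import structures.
From mathcomp Require Import all_boot all_order all_algebra all_field.
From mathcomp Require Import ring lra zify.
Import Order.TTheory GRing.Theory Num.Theory.
Set Implicit Arguments. Unset Strict Implicit. Unset Printing Implicit Defensive.
Local Open Scope ring_scope.

(* For r = [2, 2k, -2, -2] the Alexander polynomial is
     Delta(t) = k (t - 1)^4 + k t (t - 1)^2 + t^2,
   a palindromic quartic: for t != 0 we have Delta(t) = t^2 Q(t + 1/t) with
     Q(c) = k c^2 - 3 k c + 2 k + 1,
   so the zeros of Delta are the solutions of z + 1/z = c, c a zero of Q.
   The location of z is governed by the Joukowski map z |-> z + 1/z:
   if c is real and c^2 >= 4 then z is real, if c is real and c^2 < 4 then
   z is a non-real point of the unit circle, and if c is not real then z is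
   neither real nor of modulus 1.  The zeros of Q are real exactly when the
   discriminant k^2 - 4k is nonnegative, i.e. when k < 0 or k >= 4.  For
   k >= 4 the real zeros of Q satisfy c^2 < 4; for k <= -1 the intermediate
   value theorem on [-2, 2] and on [2, 3] gives one zero of each kind. *)

Definition delta {R : comPzRingType} (k z : R) : R :=
  k * (z - 1) ^+ 4 + k * z * (z - 1) ^+ 2 + z ^+ 2.

Definition traceQ {R : comPzRingType} (k c : R) : R :=
  k * c ^+ 2 - 3 * k * c + 2 * k + 1.

(* Both expressions commute with ring morphisms; this covers evaluation of
   polynomials and the change of coefficients int -> algC or algR -> algC. *)
Lemma rmorph_delta (R S : comPzRingType) (f : {rmorphism R -> S}) (k z : R) :
  f (delta k z) = delta (f k) (f z).
Proof. by rewrite /delta !rmorphD !rmorphXn !rmorphM rmorphB rmorph1. Qed.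

Lemma rmorph_traceQ (R S : comPzRingType) (f : {rmorphism R -> S}) (k c : R) :
  f (traceQ k c) = traceQ (f k) (f c).
Proof.
by rewrite /traceQ !rmorphD rmorphN rmorphM rmorphXn !rmorphM !rmorph_nat rmorph1.
Qed.

Lemma alexander_polyE (k : int) :
  alexander_poly [:: 2; 2 * k; -2; -2] = delta k%:P 'X.
Proof.
rewrite /alexander_poly /delta.
pose m (i j : nat) : int := if i == j then ([:: 2; 2 * k; -2; -2]`_i %/ 2)%Z
  else if j == i.+1 then 1 else 0.
have -> : \matrix_(i, j) ('X * ((Mr [:: 2; 2 * k; -2; -2]) i j)%:P
                          - ((Mr [:: 2; 2 * k; -2; -2]) j i)%:P)
    = \matrix_(i < 4, j < 4) ('X * (m i j)%:P - (m j i)%:P).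
  by apply/matrixP => i j; rewrite !mxE.
do 3! (rewrite !(expand_det_row _ 0) !big_ord_recl !big_ord0 /cofactor).
rewrite !det_mx11 !mxE; cbv [bump]; rewrite /m /=.
rewrite mulKz // (_ : (2 %/ 2)%Z = 1) // (_ : (-2 %/ 2)%Z = -1) //.
rewrite !add0n !rmorphN /= !polyC1 !polyC0.
ring.
Qed.

Lemma zero_of_alexander (k : int) (z : algC) :
  is_zero_of (alexander_poly [:: 2; 2 * k; -2; -2]) z <-> delta (k%:~R) z = 0.
Proof.
rewrite /is_zero_of alexander_polyE rootE -[_.[z]]/(horner_eval z _).
by rewrite !rmorph_delta /= map_polyC map_polyX /horner_eval hornerC hornerX; split => /eqP.
Qed.

Lemma delta_palindromic (F : fieldType) (k z : F) : z != 0 ->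
  delta k z = z ^+ 2 * traceQ k (z + z^-1).
Proof. by move=> z0; rewrite /delta /traceQ; field. Qed.

(* Since delta k 0 = k, for k != 0 the zeros of delta are exactly the
   nonzero z whose trace z + 1/z is a zero of traceQ. *)
Lemma delta_eq0 (F : fieldType) (k z : F) : k != 0 ->
  delta k z = 0 <-> z != 0 /\ traceQ k (z + z^-1) = 0.
Proof.
move=> k0; have [->|z0] := eqVneq z 0.
  rewrite /delta expr0n /= !(mulr0, mul0r, addr0) sub0r -signr_odd /= expr0 mulr1.
  by split=> [/eqP|[]//]; rewrite (negbTE k0).
rewrite delta_palindromic //; split=> [/eqP|[_ ->]]; last by rewrite mulr0.
by rewrite mulf_eq0 expf_eq0 /= (negbTE z0) => /eqP.
Qed.

Lemma zero_of_alexander_trace (k : int) (z : algC) : k != 0 ->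
  is_zero_of (alexander_poly [:: 2; 2 * k; -2; -2]) z <->
  z != 0 /\ traceQ (k%:~R : algC) (z + z^-1) = 0.
Proof. by move=> k0; rewrite zero_of_alexander; apply: delta_eq0; rewrite intr_eq0. Qed.

Lemma joukowski_sqr (F : fieldType) (z : F) : z != 0 ->
  (z - z^-1) ^+ 2 = (z + z^-1) ^+ 2 - 4.
Proof. by move=> z0; field. Qed.

(* Every c is a trace: z = (c + sqrt(c^2 - 4)) / 2 has inverse
   (c - sqrt(c^2 - 4)) / 2. *)
Lemma joukowski_surjective (C : numClosedFieldType) (c : C) :
  exists2 z : C, z != 0 & z + z^-1 = c.
Proof.
set s := sqrtC (c ^+ 2 - 4); set z := (c + s) / 2; set w := (c - s) / 2.
have zw : z * w = 1.
  have -> : z * w = (c ^+ 2 - s ^+ 2) / 4 by rewrite /z /w; field.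
  by rewrite sqrtCK opprB addrC subrK divff // pnatr_eq0.
have z0 : z != 0 by apply: contra_eq_neq zw => ->; rewrite mul0r eq_sym oner_neq0.
exists z => //; have -> : z^-1 = w by rewrite -[w](mulKf z0) zw mulr1.
by rewrite /z /w; field.
Qed.

(* On the unit circle 1/z is the conjugate of z, so the trace is real. *)
Lemma unit_joukowski_real (C : numClosedFieldType) (z : C) :
  `|z| = 1 -> z + z^-1 \is Num.real.
Proof.
move=> z1; rewrite invC_norm z1 expr1n invr1 mul1r CrealE.
by rewrite rmorphD /= conjCK addrC.
Qed.

(* Conversely, a non-real z with real trace lies on the unit circle, since
   z + 1/z - conj(z + 1/z) = (z - conj z) (1 - 1/|z|^2). *)
Lemma nonreal_joukowski_real (C : numClosedFieldType) (z : C) : z != 0 ->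
  z \isn't Num.real -> z + z^-1 \is Num.real -> `|z| = 1.
Proof.
move=> z0 zNR cR; have zc0 : z^* != 0 by rewrite conjC_eq0.
have zzc : z != z^* by move: zNR; rewrite CrealE eq_sym.
have : (z - z^*) * (1 - (z * z^*)^-1) = 0.
  have -> : (z - z^*) * (1 - (z * z^*)^-1) = (z + z^-1) - (z + z^-1)^*.
    by rewrite rmorphD fmorphV; field; rewrite zc0 z0.
  by rewrite (conj_Creal cR) subrr.
move/eqP; rewrite mulf_eq0 subr_eq0 (negbTE zzc) subr_eq0 eq_sym invr_eq1 /=.
by rewrite -normCK sqrp_eq1 // => /eqP.
Qed.

(* Real trace outside (-2, 2): z - 1/z is real, hence so is z. *)
Lemma joukowski_outside (C : numClosedFieldType) (z : C) : z != 0 ->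
  z + z^-1 \is Num.real -> 4 <= (z + z^-1) ^+ 2 -> z \is Num.real.
Proof.
move=> z0 cR c2; have dR : z - z^-1 \is Num.real.
  by rewrite realEsqr joukowski_sqr // subr_ge0.
have -> : z = ((z + z^-1) + (z - z^-1)) / 2 by field; exact: z0.
by rewrite rpred_div ?rpred_nat // rpredD.
Qed.

(* Real trace inside (-2, 2): (z - 1/z)^2 < 0, so z is not real and hence
   lies on the unit circle. *)
Lemma joukowski_inside (C : numClosedFieldType) (z : C) : z != 0 ->
  z + z^-1 \is Num.real -> (z + z^-1) ^+ 2 < 4 ->
  z \isn't Num.real /\ `|z| = 1.
Proof.
move=> z0 cR c2; have zNR : z \isn't Num.real.
  apply: contraTN c2 => zR; rewrite -real_leNgt ?rpredX ?rpred_nat //.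
  rewrite -subr_ge0 -joukowski_sqr //.
  by rewrite -realEsqr rpredB ?rpredV.
by split; last exact: nonreal_joukowski_real.
Qed.

Lemma joukowski_nonreal (C : numClosedFieldType) (z : C) :
  z + z^-1 \isn't Num.real -> z \isn't Num.real /\ `|z| != 1.
Proof.
move=> cNR; split; apply: contraNN cNR; first by move=> zR; rewrite rpredD ?rpredV.
by move=> /eqP; exact: unit_joukowski_real.
Qed.

Lemma traceQ_discriminant (R : comPzRingType) (k c : R) :
  (2 * k * c - 3 * k) ^+ 2 = 4 * k * traceQ k c + (k ^+ 2 - 4 * k).
Proof. by rewrite /traceQ; ring. Qed.

Lemma traceQ_root_realE (F : numFieldType) (k c : F) :
  k \is Num.real -> k != 0 -> traceQ k c = 0 ->
  (c \is Num.real) = (0 <= k ^+ 2 - 4 * k).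
Proof.
move=> kR k0 Qc0.
have disc : (2 * k * c - 3 * k) ^+ 2 = k ^+ 2 - 4 * k.
  by rewrite traceQ_discriminant Qc0 mulr0 add0r.
rewrite -disc -realEsqr; apply/idP/idP => [cR | uR].
  by rewrite rpredB ?rpredM ?rpred_nat.
have -> : c = ((2 * k * c - 3 * k) + 3 * k) / (2 * k) by field; exact: k0.
by rewrite rpred_div ?rpredM ?rpred_nat // rpredD ?rpredM ?rpred_nat.
Qed.

(* For k >= 4 the real zeros of traceQ lie in (-2, 2) (in fact in (1, 2)). *)
Lemma traceQ_roots_small (R : realFieldType) (k c : R) :
  4 <= k -> traceQ k c = 0 -> c ^+ 2 < 4.
Proof.
rewrite /traceQ => k4 Qc0; rewrite ltNge; apply/negP => c2.
have : 0 <= (c - 1) * (c - 2).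
  case: (lerP 2 c) => c_2; first nra.
  have : c <= -2 by nra.
  nra.
nra.
Qed.

Lemma traceQ_ivt (R : rcfType) (k a b : R) : a <= b ->
  traceQ k a <= 0 <= traceQ k b \/ traceQ k b <= 0 <= traceQ k a ->
  exists2 c, a <= c <= b & traceQ k c = 0.
Proof.
have QE x : (traceQ k%:P 'X).[x] = traceQ k x.
  by rewrite -[LHS]/(horner_eval x _) rmorph_traceQ /= /horner_eval hornerC hornerX.
move=> ab [sgn | sgn].
  have [|c cab /rootP] := @poly_ivt _ (traceQ k%:P 'X) a b ab; rewrite ?QE //.
  by exists c.
have [|c cab /rootP] := @poly_ivt _ (- traceQ k%:P 'X) a b ab.
  by rewrite !hornerN !QE !oppr_le0 !oppr_ge0 andbC.
by rewrite hornerN QE => /eqP; rewrite oppr_eq0 => /eqP; exists c.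
Qed.

(* For k <= -1: traceQ k (-2) = 12k + 1 < 0 < 1 = traceQ k 2, giving a zero
   strictly inside (-2, 2). *)
Lemma traceQ_root_inside (R : rcfType) (k : R) : k <= -1 ->
  exists2 c, traceQ k c = 0 & c ^+ 2 < 4.
Proof.
move=> k1; have sgn : traceQ k (-2) <= 0 <= traceQ k 2.
  by rewrite /traceQ; apply/andP; split; nra.
have [|c /andP [c_ge c_le] Qc0] := traceQ_ivt _ (or_introl sgn); first lra.
exists c => //; move: Qc0; rewrite /traceQ => Qc0.
have c_ne2 : c != 2 by apply: contra_eq_neq Qc0 => ->; nra.
have c_neN2 : c != -2 by apply: contra_eq_neq Qc0 => ->; nra.
have : -2 < c < 2 by rewrite !lt_neqAle c_ge c_le eq_sym c_neN2 c_ne2.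
by move=> /andP [? ?]; nra.
Qed.

(* For k <= -1: traceQ k 3 = 2k + 1 < 0 < traceQ k 2, giving a zero in [2, 3]. *)
Lemma traceQ_root_outside (R : rcfType) (k : R) : k <= -1 ->
  exists2 c, traceQ k c = 0 & 4 <= c ^+ 2.
Proof.
move=> k1; have sgn : traceQ k 3 <= 0 <= traceQ k 2.
  by rewrite /traceQ; apply/andP; split; nra.
have [|c /andP [c_ge c_le] Qc0] := traceQ_ivt _ (or_intror sgn); first lra.
by exists c => //; nra.
Qed.

(* Transport to algC: the real facts above are used in the real closed field
   algR of real algebraic numbers, whose order is that of algC. *)
Lemma traceQ_algR (k : int) (c : algR) :
  traceQ (k%:~R : algC) (algRval c) = algRval (traceQ k%:~R c).
Proof. by rewrite rmorph_traceQ rmorph_int. Qed.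

Lemma algR_sqr_lt4 (c : algR) : (algRval c ^+ 2 < 4) = (c ^+ 2 < 4).
Proof. by rewrite -rmorphXn -(rmorph_nat algRval 4). Qed.

Lemma algR_sqr_ge4 (c : algR) : (4 <= algRval c ^+ 2) = (4 <= c ^+ 2).
Proof. by rewrite -rmorphXn -(rmorph_nat algRval 4). Qed.

Lemma trace_realE (k : int) (c : algC) : k != 0 -> traceQ (k%:~R : algC) c = 0 ->
  (c \is Num.real) = (0 <= k ^+ 2 - 4 * k).
Proof.
move=> k0 Qc0; rewrite (traceQ_root_realE _ _ Qc0) ?rpred_int ?intr_eq0 //.
by rewrite -(ler0z algC) rmorphB rmorphXn rmorphM.
Qed.

Lemma algC_traceQ_root_inside (k : int) : k < 0 ->
  exists2 c : algC, c \is Num.real /\ traceQ k%:~R c = 0 & c ^+ 2 < 4.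
Proof.
move=> kneg; have k1 : (k%:~R : algR) <= -1 by rewrite -[-1 : algR]/((-1)%:~R) ler_int; lia.
have [c Qc0 c2] := traceQ_root_inside k1.
by exists (algRval c); rewrite ?algR_sqr_lt4 // traceQ_algR Qc0 algRvalP.
Qed.

Lemma algC_traceQ_root_outside (k : int) : k < 0 ->
  exists2 c : algC, c \is Num.real /\ traceQ k%:~R c = 0 & 4 <= c ^+ 2.
Proof.
move=> kneg; have k1 : (k%:~R : algR) <= -1 by rewrite -[-1 : algR]/((-1)%:~R) ler_int; lia.
have [c Qc0 c2] := traceQ_root_outside k1.
by exists (algRval c); rewrite ?algR_sqr_ge4 // traceQ_algR Qc0 algRvalP.
Qed.

Lemma algC_traceQ_roots_small (k : int) (c : algC) : 4 <= k ->
  c \is Num.real -> traceQ k%:~R c = 0 -> c ^+ 2 < 4.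
Proof.
move=> k4 cR Qc0; rewrite -[c]/(algRval (in_algR cR)) algR_sqr_lt4.
apply: (@traceQ_roots_small _ k%:~R); first by rewrite -[4 : algR]/(4%:~R) ler_int.
by apply: val_inj; rewrite -[LHS]/(algRval _) -traceQ_algR.
Qed.

Theorem proposition12p2 (k : int) (hk : k != 0) :
  let D := alexander_poly [:: 2; 2 * k; -2; -2] in
  [/\ (k < 0 ->
         (forall z : algC, is_zero_of D z -> z \is Num.real \/ `|z| = 1)
         /\ (exists z : algC, is_zero_of D z /\ z \is Num.real)
         /\ (exists z : algC, is_zero_of D z /\ z \isn't Num.real /\ `|z| = 1)),
      ((k == 1) || (k == 2) || (k == 3) ->
         forall z : algC, is_zero_of D z -> z \isn't Num.real /\ `|z| != 1)
    & (4 <= k -> forall z : algC, is_zero_of D z -> `|z| = 1)].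
Proof.
move=> D; have zeroE z := zero_of_alexander_trace z hk.
have zero_of_trace (c : algC) : traceQ k%:~R c = 0 ->
    exists z, [/\ is_zero_of D z, z != 0 & z + z^-1 = c].
  move=> Qc0; have [z z0 zc] := joukowski_surjective c.
  by exists z; split => //; apply/zeroE; rewrite zc.
split.
- move=> kneg; split; [|split].
  + move=> z /zeroE [z0 Qc0].
    have cR : z + z^-1 \is Num.real by rewrite (trace_realE hk Qc0); nia.
    have [c2|c2] := boolP ((z + z^-1) ^+ 2 < 4).
      by right; case: (joukowski_inside z0 cR c2).
    by left; apply: joukowski_outside; rewrite ?real_leNgt ?rpredX ?rpred_nat.
  + have [c [cR Qc0] c2] := algC_traceQ_root_outside kneg.
    have [z [zD z0 zc]] := zero_of_trace c Qc0.
    by exists z; split; last by apply: joukowski_outside; rewrite ?zc.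
  + have [c [cR Qc0] c2] := algC_traceQ_root_inside kneg.
    have [z [zD z0 zc]] := zero_of_trace c Qc0.
    by exists z; split; last by apply: joukowski_inside; rewrite ?zc.
- move=> k123 z /zeroE [z0 Qc0]; apply: joukowski_nonreal.
  by rewrite (trace_realE hk Qc0); lia.
- move=> k4 z /zeroE [z0 Qc0].
  have cR : z + z^-1 \is Num.real by rewrite (trace_realE hk Qc0); nia.
  by case: (joukowski_inside z0 cR (algC_traceQ_roots_small k4 cR Qc0)).
Qed.
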